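(* Let $S$ be a finite poset whose Hasse graph $\Gamma(S)$ is the path $A_n$. Suppose $S$ contains a subposet $W$ isomorphic to $W^{k,k+1}$ ($k\ge1$) with $s_1^+,s_{k+1}^+\notin S^\times$, or a subposet $W$ isomorphic to $W^{k+1,k}$ with $s_1^-,s_{k+1}^-\notin S^\times$. Then $C(f_S)\ne\varnothing$.
   Context: $f_S(x)=\sum_i x_i^2+\sum_{s_i<s_j}x_ix_j$. $H_n=\{x:\sum x_i=0\}$; $C(f)$ is the set of $h\in H_n\setminus\{0\}$ with either all $\partial f/\partial x_i(h)\le0$ or all $\ge0$. $\Gamma(S)$: vertices $S$, edge between $s,s'$ when one covers the other. $W^{k,k+1}=\{s_1^-,\dots,s_k^-,s_1^+,\dots,s_{k+1}^+\}$ with only strict relations $s_i^-<s_i^+$, $s_i^-<s_{i+1}^+$ ($1\le i\le k$); $W^{k+1,k}=\{s_1^-,\dots,s_{k+1}^-,s_1^+,\dots,s_k^+\}$ with only strict relations $s_i^+>s_i^-$, $s_i^+>s_{i+1}^-$ ($1\le i\le k$). $S^\times$ is the set of junction points of $S$: elements covering at least two elements of $S$ or covered by at least two elements of $S$. *)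

From HB Require Import structures.
From mathcomp Require Import all_boot all_order all_algebra.
From mathcomp Require Import mpoly.
Set Implicit Arguments. Unset Strict Implicit. Unset Printing Implicit Defensive.
Import Order.LTheory GRing.Theory Num.Theory.

Section PosetDefs.
Context {disp : Order.disp_t} {S : finPOrderType disp}.
Local Open Scope order_scope.

Definition covers (x y : S) : bool :=
  (y < x) && [forall z : S, ~~ ((y < z) && (z < x))].

Definition hasse_edge (x y : S) : bool := covers x y || covers y x.

Definition hasse_is_path : Prop :=
  exists p : 'I_#|S| -> S, bijective p /\
    forall i j : 'I_#|S|,
      hasse_edge (p i) (p j) = ((i.+1 == j :> nat) || (j.+1 == i :> nat)).

Definition junction (x : S) : bool :=
  (1 < #|[set y : S | covers x y]|)%N || (1 < #|[set y : S | covers y x]|)%N.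

(* W^{k,k+1}: elements inl i = s_{i+1}^- (i < k), inr j = s_{j+1}^+ (j < k+1);
   only strict relations s_i^- < s_i^+, s_i^- < s_{i+1}^+. *)
Definition Wkk1_lt (k : nat) (a b : 'I_k + 'I_k.+1) : bool :=
  match a, b with
  | inl i, inr j => (j == i :> nat) || (j == i.+1 :> nat)
  | _, _ => false
  end.

(* W^{k+1,k}: elements inl i = s_{i+1}^- (i < k+1), inr j = s_{j+1}^+ (j < k);
   only strict relations s_j^+ > s_j^-, s_j^+ > s_{j+1}^-. *)
Definition Wk1k_lt (k : nat) (a b : 'I_k.+1 + 'I_k) : bool :=
  match a, b with
  | inl i, inr j => (i == j :> nat) || (i == j.+1 :> nat)
  | _, _ => false
  end.

Definition has_Wkk1 (k : nat) : Prop :=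
  exists phi : 'I_k + 'I_k.+1 -> S,
    injective phi /\
    (forall a b, (phi a < phi b) = Wkk1_lt a b) /\
    ~~ junction (phi (inr ord0)) /\ ~~ junction (phi (inr ord_max)).

Definition has_Wk1k (k : nat) : Prop :=
  exists phi : 'I_k.+1 + 'I_k -> S,
    injective phi /\
    (forall a b, (phi a < phi b) = Wk1k_lt a b) /\
    ~~ junction (phi (inl ord0)) /\ ~~ junction (phi (inl ord_max)).

End PosetDefs.

Section Quadratic.
Context {disp : Order.disp_t} {S : finPOrderType disp} (R : realFieldType).
Local Open Scope ring_scope.

(* label S = {s_1,...,s_n} via enum_val; f_S in variables x_i, i < n *)
Definition fS : {mpoly R[#|S|]} :=
  \sum_(i < #|S|) 'X_i ^+ 2
  + \sum_(i < #|S|) \sum_(j < #|S| | (enum_val i < enum_val j)%O) 'X_i * 'X_j.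

(* C(f) : nonzero h in H_n with all partial derivatives <= 0 or all >= 0 *)
Definition Cset (n : nat) (f : {mpoly R[n]}) : ('I_n -> R) -> Prop :=
  fun h => (exists i, h i != 0) /\ \sum_(i < n) h i = 0 /\
    ((forall i, (mderiv i f).@[h] <= 0) \/ (forall i, 0 <= (mderiv i f).@[h])).

End Quadratic.

From HB Require Import structures.
From mathcomp Require Import all_boot all_order all_algebra.
From mathcomp Require Import mpoly.
From mathcomp Require Import zify ring lra.
Set Implicit Arguments. Unset Strict Implicit. Unset Printing Implicit Defensive.
Import Order.LTheory GRing.Theory Num.Theory.

(* List S as s_0, ..., s_{n-1} along the Hasse path and orient each edge
   {s_i, s_{i+1}} upwards or downwards.  Two elements are comparable iff all
   edges between them point the same way, and the partial derivative of f_S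
   in the direction of x at h is h x + sum_{y >=< x} h y.  The subposet W
   yields z_0, ..., z_K (K = 2k) at positions c_0 < ... < c_K (after reversing
   the path if necessary) such that each stretch [c_t, c_{t+1}] is monotone,
   the orientation flips at every interior c_t and, as z_0 and z_K are not
   junctions, it does not flip at c_0 and c_K.  Put the weights
   (1, -2, 2, -2, ..., 2, -2, 1) on z_0, ..., z_K and 0 elsewhere.  An element
   off the zigzag is comparable to no z_t or to exactly two consecutive ones,
   and z_u is comparable to z_{u-1}, z_u, z_{u+1} only; so every partial
   derivative is 0, w_a + w_{a+1} or 2 w_u + w_{u-1} + w_{u+1}, all <= 0. *)

Section DirectionRuns.
Variable d : nat -> bool.

Definition dir_const (i j : nat) : bool :=
  all (fun s => d s == d (minn i j)) (index_iota (minn i j) (maxn i j)).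

Definition turn (s : nat) : bool := d s.-1 != d s.

Lemma dir_constP i j :
  reflect (forall s, minn i j <= s < maxn i j -> d s = d (minn i j)) (dir_const i j).
Proof.
apply: (iffP allP) => H s; first by move=> hs; apply/eqP/H; rewrite mem_index_iota.
by rewrite mem_index_iota => /H ->.
Qed.

Lemma dir_constC i j : dir_const i j = dir_const j i.
Proof. by rewrite /dir_const minnC maxnC. Qed.

Lemma dir_constnn i : dir_const i i.
Proof. by apply/dir_constP => s; lia. Qed.

Lemma dir_const_sub i j i' j' : minn i j <= minn i' j' -> maxn i' j' <= maxn i j ->
  dir_const i j -> dir_const i' j'.
Proof.
move=> le_min le_max /dir_constP H; apply/dir_constP => s hs.
by rewrite H ?(H (minn i' j')) //; lia.
Qed.

Lemma dir_const_cat i j k : i < j < k -> ~~ turn j ->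
  dir_const i j -> dir_const j k -> dir_const i k.
Proof.
move=> ijk /negPn /eqP dj /dir_constP Hij /dir_constP Hjk; apply/dir_constP => s hs.
have [-> mij mjk] : [/\ minn i k = i, minn i j = i & minn j k = j] by split; lia.
rewrite mij in Hij; rewrite mjk in Hjk.
have dji : d j = d i by rewrite -dj Hij //; lia.
by case: (ltnP s j) => sj; [rewrite (Hij s) | rewrite -dji (Hjk s)]; lia.
Qed.

Lemma turn_not_dir_const s i j : turn s -> minn i j < s < maxn i j -> ~~ dir_const i j.
Proof.
move=> ts hs; apply: contra ts => /dir_constP H.
by rewrite (H s) ?(H s.-1) //; lia.
Qed.

End DirectionRuns.

Section PartialDerivatives.
Variable R : realFieldType.
Local Open Scope ring_scope.

Lemma meval_mderivX n (i m : 'I_n) (h : 'I_n -> R) :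
  (mderiv m 'X_i).@[h] = (i == m)%:R.
Proof.
rewrite mderivX mnm1E mevalZ; case: eqP => [->|_]; last by rewrite mul0r.
by rewrite mevalX big1 ?mulr1 // => j _; rewrite mnmBE !mnm1E subnn expr0.
Qed.

Lemma meval_mderivXM n (i j m : 'I_n) (h : 'I_n -> R) :
  (mderiv m ('X_i * 'X_j)).@[h] = (i == m)%:R * h j + h i * (j == m)%:R.
Proof. by rewrite mderivM mevalD !mevalM !meval_mderivX !mevalXU. Qed.

Context {disp : Order.disp_t} {S : finPOrderType disp}.

Lemma sum_comparable (m : 'I_#|S|) (h : 'I_#|S| -> R) :
  \sum_(j | (enum_val j >=< enum_val m)%O) h j =
  h m + (\sum_(j | (enum_val m < enum_val j)%O) h j
         + \sum_(j | (enum_val j < enum_val m)%O) h j).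
Proof.
rewrite (bigD1 m) ?comparablexx //=; congr (_ + _).
rewrite (bigID (fun j => (enum_val m < enum_val j)%O)) /=.
have val_neq j : (j != m) = (enum_val j != enum_val m).
  by rewrite (inj_eq enum_val_inj).
congr (_ + _); apply: eq_bigl => j; rewrite val_neq; by case: comparableP.
Qed.

Lemma meval_mderiv_fS (m : 'I_#|S|) (h : 'I_#|S| -> R) :
  (mderiv m (fS R)).@[h] = h m + \sum_(j | (enum_val j >=< enum_val m)%O) h j.
Proof.
rewrite sum_comparable addrA -mulr2n -mulr_natl.
rewrite /fS mderivD mevalD !(raddf_sum (mderiv m)) !(raddf_sum (meval h)) /=.
congr (_ + _).
  rewrite (bigD1 m) //= big1 ?addr0.
    by rewrite expr2 meval_mderivXM eqxx mul1r mulr1 mulr_natl mulr2n.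
  by move=> i /negbTE ne; rewrite expr2 meval_mderivXM ne mul0r mulr0 addr0.
under eq_bigr => i _ do rewrite (raddf_sum (mderiv m)) (raddf_sum (meval h)).
rewrite (eq_bigr (fun i => \sum_(j | (enum_val i < enum_val j)%O) (i == m)%:R * h j
   + \sum_(j | (enum_val i < enum_val j)%O) h i * (j == m)%:R)); last first.
  by move=> i _; rewrite -big_split; apply: eq_bigr => j _; exact: meval_mderivXM.
rewrite big_split /=; congr (_ + _).
  rewrite (bigD1 m) //= [X in _ + X]big1 ?addr0.
    by apply: eq_bigr => j _; rewrite eqxx mul1r.
  by move=> i /negbTE ne; rewrite big1 // => j _; rewrite ne mul0r.
rewrite (exchange_big_dep xpredT) //= (bigD1 m) //= [X in _ + X]big1 ?addr0.
  by apply: eq_bigr => i _; rewrite eqxx mulr1.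
by move=> j /negbTE ne; rewrite big1 // => i _; rewrite ne mulr0.
Qed.

Lemma Cset_fS_weights (H : S -> R) :
  (exists x, H x != 0) -> \sum_x H x = 0 ->
  (forall x, H x + \sum_(y | (y >=< x)%O) H y <= 0) ->
  Cset (fS R) (fun i => H (enum_val i)).
Proof.
move=> [x Hx] sumH0 dH; split; [|split].
- by exists (enum_rank x); rewrite enum_rankK.
- by rewrite -(big_enum_val H).
- left=> m; rewrite meval_mderiv_fS.
  rewrite -(big_enum_val_cond (A := predT) (fun y => (y >=< enum_val m)%O) H).
  exact: dH.
Qed.

End PartialDerivatives.

Section HassePath.
Context {disp : Order.disp_t} {S : finPOrderType disp}.
Local Open Scope order_scope.

Definition hasse_path_labelling (p : 'I_#|S| -> S) : Prop :=
  forall i j : 'I_#|S|,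
    hasse_edge (p i) (p j) = ((i.+1 == j :> nat) || (j.+1 == i :> nat)).

Lemma hasse_path_labelling_rev p :
  hasse_path_labelling p -> hasse_path_labelling (p \o @rev_ord #|S|).
Proof.
move=> p_path i j; rewrite /= p_path /=.
have := ltn_ord i; have := ltn_ord j; move: #|S| (nat_of_ord i) (nat_of_ord j) => m a b.
by move=> bm am; apply/idP/idP => /orP[] /eqP e; apply/orP; lia.
Qed.

Lemma covers_lt (x y : S) : covers x y -> y < x.
Proof. by case/andP. Qed.

Lemma hasse_edge_covers (x y : S) : hasse_edge x y -> y < x -> covers x y.
Proof. by case/orP => // /covers_lt xy yx; have := lt_trans xy yx; rewrite ltxx. Qed.

Lemma not_covers_between (x y : S) : ~~ covers y x -> x < y -> exists z, x < z < y.
Proof.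
by rewrite /covers => + xy; rewrite xy /= => /forallPn[z]; rewrite negbK; exists z.
Qed.

Variables (p : 'I_#|S| -> S) (g : S -> 'I_#|S|).
Hypotheses (pK : cancel p g) (gK : cancel g p) (p_path : hasse_path_labelling p).
Variable x0 : 'I_#|S|.

Definition pos (x : S) : nat := g x.
Definition at_pos (s : nat) : S := p (insubd x0 s).
Definition ascends (s : nat) : bool := at_pos s < at_pos s.+1.

Lemma pos_lt x : (pos x < #|S|)%N.
Proof. exact: ltn_ord. Qed.

Lemma at_posK x : at_pos (pos x) = x.
Proof. by rewrite /at_pos /pos valKd gK. Qed.

Lemma posK s : (s < #|S|)%N -> pos (at_pos s) = s.
Proof. by move=> sn; rewrite /pos /at_pos pK val_insubd sn. Qed.

Lemma pos_inj : injective pos.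
Proof. by move=> x y /val_inj /(can_inj gK). Qed.

Lemma hasse_edge_pos x y :
  hasse_edge x y = ((pos x).+1 == pos y) || ((pos y).+1 == pos x).
Proof. by rewrite -p_path !gK. Qed.

Lemma hasse_edge_at_pos s : (s.+1 < #|S|)%N -> hasse_edge (at_pos s) (at_pos s.+1).
Proof. by move=> sn; rewrite hasse_edge_pos !posK ?eqxx //; lia. Qed.

Lemma descends s : (s.+1 < #|S|)%N -> ~~ ascends s -> at_pos s.+1 < at_pos s.
Proof.
move=> sn nasc; case/orP: (hasse_edge_at_pos sn) => /covers_lt // asc.
by move: nasc; rewrite /ascends asc.
Qed.

Definition climbs (i j : nat) : Prop :=
  i != j /\ forall s, (minn i j <= s < maxn i j)%N -> ascends s = (i < j)%N.

Lemma climbs_trans i k j : climbs i k -> climbs k j -> climbs i j.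
Proof.
move=> [ik Hik] [kj Hkj].
have no_peak : ~~ ((i < k) && (j < k))%N.
  by apply/negP => /andP[ik' jk']; move: (Hik k.-1) (Hkj k.-1); lia.
have no_valley : ~~ ((k < i) && (k < j))%N.
  by apply/negP => /andP[ki kj']; move: (Hik k) (Hkj k); lia.
split=> [|s hs]; first lia.
have [sik | skj] : (minn i k <= s < maxn i k)%N \/ (minn k j <= s < maxn k j)%N by lia.
  by rewrite Hik //; lia.
by rewrite Hkj //; lia.
Qed.

Lemma covers_climbs x y : covers y x -> climbs (pos x) (pos y).
Proof.
move=> cov; have xy := covers_lt cov.
have : hasse_edge y x by rewrite /hasse_edge cov.
rewrite hasse_edge_pos => /orP[] /eqP e; split; try lia; move=> s hs.
  have -> : s = pos y by lia.
  by rewrite /ascends e !at_posK (lt_gtF xy); lia.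
have -> : s = pos x by lia.
by rewrite /ascends e !at_posK xy; lia.
Qed.

Lemma lt_climbs x y : x < y -> climbs (pos x) (pos y).
Proof.
have [N] := ubnP #|[set z | x < z < y]|; elim: N x y => // N IH x y hN xy.
have [cov|ncov] := boolP (covers y x); first exact: covers_climbs.
have [z /andP[xz zy]] := not_covers_between ncov xy.
have smaller (a b : S) : [set w | a < w < b] \proper [set w | x < w < y] ->
    (#|[set w | (a < w < b)%O]| < N)%N.
  by move/proper_card; lia.
apply: climbs_trans (IH x z _ xz) (IH z y _ zy); apply: smaller; apply/properP;
  split; try (by exists z; rewrite !inE ?xz ?zy ?ltxx ?andbF);
  apply/subsetP => w; rewrite !inE => /andP[xw wy].
- by rewrite xw (lt_trans wy zy).
- by rewrite wy (lt_trans xz xw).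
Qed.

Lemma climbs_dir_const i j : climbs i j -> dir_const ascends i j.
Proof. by move=> [_ H]; apply/dir_constP => s hs; rewrite !H //; lia. Qed.

Lemma dir_const_le i j : (i <= j < #|S|)%N -> dir_const ascends i j ->
  if ascends i then at_pos i <= at_pos j else at_pos j <= at_pos i.
Proof.
elim: j => [|j IH] /andP[ij jn] /dir_constP run.
  have -> : i = 0 by lia.
  by case: ifP.
have [-> | ij1] := eqVneq i j.+1; first by case: ifP.
have IHj : if ascends i then at_pos i <= at_pos j else at_pos j <= at_pos i.
  apply: IH; first lia.
  by apply/dir_constP => s hs; rewrite !run //; lia.
move: IHj.
have -> : ascends i = ascends j by rewrite !run //; lia.
case: ifP => aj; first by move/le_trans; apply; apply/ltW.
by move=> ji; apply: le_trans ji; apply/ltW/descends => //; rewrite aj.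
Qed.

Lemma comparable_pos x y : (x >=< y) = dir_const ascends (pos x) (pos y).
Proof.
apply/idP/idP => [|run].
  case: comparableP => // [xy|yx|->] _; last exact: dir_constnn.
    exact/climbs_dir_const/lt_climbs.
  by rewrite dir_constC; apply/climbs_dir_const/lt_climbs.
wlog xy : x y run / (pos x <= pos y)%N.
  move=> W; have [|/ltnW] := leqP (pos x) (pos y); first exact: W.
  by rewrite comparable_sym; apply: W; rewrite dir_constC.
have := @dir_const_le (pos x) (pos y); rewrite xy pos_lt !at_posK => /(_ isT run).
by case: ifP => _; [apply: le_comparable | apply: ge_comparable].
Qed.

Lemma turn_junction s :
  (0 < s)%N -> (s.+1 < #|S|)%N -> turn ascends s -> junction (at_pos s).
Proof.
move=> s0 sn; rewrite /turn /ascends prednK //.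
set a := at_pos s.-1; set b := at_pos s.+1; set x := at_pos s.
have ab : a != b by apply/eqP => /(congr1 pos); rewrite !posK; lia.
have edge_a : hasse_edge x a.
  rewrite /hasse_edge orbC; have := @hasse_edge_at_pos s.-1.
  by rewrite prednK //; apply; lia.
have edge_b : hasse_edge x b by apply: hasse_edge_at_pos.
have two (Q : pred S) : Q a -> Q b -> (1 < #|[set y | Q y]|)%N.
  by move=> Qa Qb; apply/card_gt1P; exists a, b; rewrite !inE Qa Qb.
have /orP[ax | xa] : (a < x) || (x < a).
  by case/orP: edge_a => /covers_lt ->; rewrite ?orbT.
- rewrite ax => bx; apply/orP; left; apply: two; apply: hasse_edge_covers => //.
  by apply: descends; rewrite // bx.
- rewrite (lt_gtF xa) /= => /negbNE xb; apply/orP; right; apply: two;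
    apply: hasse_edge_covers => //; rewrite /hasse_edge orbC //.
Qed.

End HassePath.

Section ZigzagWeight.
Variables (R : realFieldType) (K : nat).
Local Open Scope ring_scope.

(* For even K, the weights (1, -2, 2, -2, ..., 2, -2, 1) of t = 0, ..., K. *)
Definition zigzag_weight (t : nat) : R := (-1) ^+ t * ((0 < t)%N%:R + (t < K)%N%:R).

Lemma sum_zigzag_weight : \sum_(t < K.+1) zigzag_weight t = 0.
Proof.
under eq_bigr do rewrite /zigzag_weight mulrDr.
rewrite big_split /= big_ord_recl big_ord_recr /= ltnn !mulr0 add0r addr0 -big_split.
by rewrite big1 // => t _; rewrite /bump /= add1n ltn_ord exprS mulr1 mulN1r mulr1 addNr.
Qed.

Lemma zigzag_weight_even t :
  ~~ odd t -> zigzag_weight t = (0 < t)%N%:R + (t < K)%N%:R.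
Proof. by move=> et; rewrite /zigzag_weight -signr_odd (negbTE et) mul1r. Qed.

Lemma zigzag_weight_odd t : ~~ odd K -> odd t -> (t <= K)%N -> zigzag_weight t = -2.
Proof.
move=> eK ot tK; have [t0 tK'] : (0 < t)%N /\ (t < K)%N.
  by split; [case: t ot {tK} | rewrite ltn_neqAle tK andbT; apply: contraNneq eK => <-].
by rewrite /zigzag_weight -signr_odd ot t0 tK' mulN1r.
Qed.

Lemma zigzag_weight_le2 t : zigzag_weight t <= 2.
Proof.
rewrite /zigzag_weight -signr_odd.
by case: odd; case: (0 < t)%N; case: (t < K)%N; rewrite /=; lra.
Qed.

Hypothesis K_even : ~~ odd K.

Lemma zigzag_weight_pair_le0 a :
  (a < K)%N -> zigzag_weight a + zigzag_weight a.+1 <= 0.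
Proof.
move=> aK; have := zigzag_weight_le2 a; have := zigzag_weight_le2 a.+1.
case oa: (odd a).
  by rewrite (zigzag_weight_odd K_even oa (ltnW aK)); lra.
by rewrite (zigzag_weight_odd K_even _ aK) /= ?oa //; lra.
Qed.

Lemma zigzag_weight_triple_le0 u : (u <= K)%N ->
  2 * zigzag_weight u + (0 < u)%N%:R * zigzag_weight u.-1
  + (u < K)%N%:R * zigzag_weight u.+1 <= 0.
Proof.
move=> uK; case ou: (odd u).
  have [u0 uK'] : (0 < u)%N /\ (u < K)%N.
    by split; [case: u ou {uK} | rewrite ltn_neqAle uK andbT; apply: contraNneq K_even => <-].
  rewrite u0 uK' (zigzag_weight_odd K_even ou uK) !mul1r.
  have := zigzag_weight_le2 u.-1; have := zigzag_weight_le2 u.+1; lra.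
rewrite zigzag_weight_even ?ou //.
have odd_pred : (0 < u)%N -> zigzag_weight u.-1 = -2.
  move=> u0; apply: zigzag_weight_odd K_even _ (leq_trans (leq_pred u) uK).
  by move: ou u0; case: u {uK} => //= u; case: odd.
have odd_succ : (u < K)%N -> zigzag_weight u.+1 = -2.
  by move=> uK'; apply: zigzag_weight_odd; rewrite //= ou.
by case u0: (0 < u)%N; case uK': (u < K)%N;
  rewrite /= ?mul0r ?mul1r ?odd_pred ?odd_succ //; lra.
Qed.

End ZigzagWeight.

Lemma sum_delta (R : pzSemiRingType) m v (f : nat -> R) :
  (\sum_(t < m) (t == v :> nat)%:R * f t = (v < m)%:R * f v)%R.
Proof.
case: (ltnP v m) => vm; last first.
  rewrite mul0r big1 // => t _.
  have /negbTE -> : (t : nat) != v by apply/eqP => tv; move: (ltn_ord t); lia.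
  by rewrite mul0r.
rewrite (bigD1 (Ordinal vm)) //= eqxx big1 ?addr0 // => t.
by rewrite -val_eqE /= => /negbTE ->; rewrite mul0r.
Qed.

Section RunsOfZigzag.
Variables (d : nat -> bool) (K : nat) (c : nat -> nat).
Hypotheses (c01 : c 0 < c 1) (c_neq : forall t, t < K -> c t != c t.+1)
  (c_run : forall t, t < K -> dir_const d (c t) (c t.+1))
  (c_not_run : forall t, t.+2 <= K -> ~~ dir_const d (c t) (c t.+2)).

Lemma runs_incr t : t < K -> c t < c t.+1.
Proof.
elim: t => // t IH tK; have := c_neq tK; rewrite neq_ltn => /orP[// | lt21].
have lt01 := IH (ltnW tK); case/negP: (c_not_run tK).
have [le02 | lt20] := leqP (c t) (c t.+2).
  by apply: dir_const_sub (c_run (ltnW tK)); lia.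
by apply: dir_const_sub (c_run tK); lia.
Qed.

Lemma runs_turn v : 0 < v < K -> turn d (c v).
Proof.
move=> /andP[v0 vK]; have [v1 v1K] : v.-1.+1 = v /\ v.-1 < K by split; lia.
have lt0 := runs_incr v1K; have lt1 := runs_incr vK; have run0 := c_run v1K.
rewrite v1 in lt0 run0; have := @c_not_run v.-1; rewrite v1 => /(_ vK).
by apply: contraR => no_turn; apply: dir_const_cat no_turn run0 (c_run vK); rewrite lt0.
Qed.

End RunsOfZigzag.

Section IncreasingPositions.
Variables (K : nat) (c : nat -> nat).
Hypothesis c_incr : forall t, t < K -> c t < c t.+1.

Lemma c_ltn t u : t < u -> u <= K -> c t < c u.
Proof.
elim: u => // u IH; rewrite ltnS leq_eqVlt => /predU1P[-> | tu] uK; first exact: c_incr.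
exact: ltn_trans (IH tu (ltnW uK)) (c_incr uK).
Qed.

Lemma c_leq t u : t <= u -> u <= K -> c t <= c u.
Proof. by rewrite leq_eqVlt => /predU1P[-> //|tu] uK; apply/ltnW/c_ltn. Qed.

Lemma c_eq t u : t <= K -> u <= K -> (c t == c u) = (t == u).
Proof.
move=> tK uK; apply/eqP/eqP => [|-> //]; apply: contra_eq.
by rewrite neq_ltn => /orP[lt|lt]; [have := c_ltn lt uK | have := c_ltn lt tK]; lia.
Qed.

Lemma c_bracket s : c 0 <= s -> exists2 u, u <= K & c u <= s /\ (u < K -> s < c u.+1).
Proof.
move=> s0; have exP : exists u, (u <= K) && (c u <= s) by exists 0; rewrite s0.
have ubP u : (u <= K) && (c u <= s) -> u <= K by case/andP.
case: (ex_maxnP exP ubP) => u /andP[uK cus] umax; exists u => //; split=> // uK'.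
by rewrite ltnNge; apply/negP => le; have := umax u.+1; rewrite uK' le => /(_ isT); lia.
Qed.

End IncreasingPositions.

Section ZigzagPositions.
Variables (R : realFieldType) (d : nat -> bool) (n K : nat) (c : nat -> nat).
Hypotheses (K_gt0 : 0 < K) (K_even : ~~ odd K).
Hypotheses (c_incr : forall t, t < K -> c t < c t.+1)
  (c_run : forall t, t < K -> dir_const d (c t) (c t.+1))
  (c_turn : forall v, 0 < v < K -> turn d (c v))
  (c_first : 0 < c 0 -> ~~ turn d (c 0))
  (c_last : (c K).+1 < n -> ~~ turn d (c K)).

Local Notation w := (zigzag_weight R K).

(* The partial derivative of f_S at the element in position s, for the weights
   w t on the elements in positions c t. *)
Definition zigzag_deriv (s : nat) : R :=
  (\sum_(t < K.+1) ((s == c t)%:R + (dir_const d s (c t))%:R) * w t)%R.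

Lemma turn_between v i j : 0 < v < K -> minn i j < c v < maxn i j -> ~~ dir_const d i j.
Proof. by move=> vK; apply: turn_not_dir_const; apply: c_turn. Qed.

Lemma not_dir_const_below s t v : t < v < K -> c v < s -> ~~ dir_const d s (c t).
Proof.
move=> tvK vs; apply: (@turn_between v) => //; first lia.
by have := c_ltn c_incr (_ : t < v) (ltnW (_ : v < K)); lia.
Qed.

Lemma not_dir_const_above s t v : 0 < v < t -> t <= K -> s < c v -> ~~ dir_const d s (c t).
Proof.
move=> vt tK sv; apply: (@turn_between v) => //; first lia.
by have := c_ltn c_incr (_ : v < t) tK; lia.
Qed.

Lemma zigzag_deriv_pair s a b : a < K -> (forall t, t <= K -> s != c t) ->
  (forall t, t <= K -> dir_const d s (c t) = b && (a <= t <= a.+1)) ->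
  zigzag_deriv s = (b%:R * (w a + w a.+1))%R.
Proof.
move=> aK s_off Hs; rewrite /zigzag_deriv.
rewrite (eq_bigr (fun t : 'I_K.+1 =>
  (t == a :> nat)%:R * (b%:R * w t) + (t == a.+1 :> nat)%:R * (b%:R * w t))%R).
  rewrite big_split /= !(sum_delta _ _ (fun t => b%:R * w t)%R).
  by rewrite !ltnS (ltnW aK) aK !mul1r mulrDr.
move=> t _; have tK : t <= K := ltn_ord t.
rewrite (negbTE (s_off t tK)) Hs // -natrD.
have -> : (false + (b && (a <= t <= a.+1))
  = ((t == a :> nat) + (t == a.+1 :> nat)) * b)%N by lia.
by rewrite natrM natrD; ring.
Qed.

Lemma zigzag_deriv_node u : u <= K ->
  (forall t, t <= K -> dir_const d (c u) (c t) = (u.-1 <= t <= u.+1)) ->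
  zigzag_deriv (c u) =
    (2 * w u + (0 < u)%:R * w u.-1 + (u < K)%:R * w u.+1)%R.
Proof.
move=> uK Hu; rewrite /zigzag_deriv.
rewrite (eq_bigr (fun t : 'I_K.+1 => (t == u :> nat)%:R * (2 * w t)
  + (t == u.-1 :> nat)%:R * ((0 < u)%:R * w t) + (t == u.+1 :> nat)%:R * w t)%R).
  rewrite !big_split /= (sum_delta _ _ (fun t => 2 * w t)%R).
  rewrite (sum_delta _ _ (fun t => (0 < u)%:R * w t)%R) (sum_delta _ _ w).
  by rewrite !ltnS uK (leq_trans (leq_pred u) uK) !mul1r.
move=> t _; have tK : t <= K := ltn_ord t.
rewrite (c_eq c_incr) // Hu // -natrD.
have -> : ((u == t) + (u.-1 <= t <= u.+1)
  = (t == u :> nat) * 2 + (t == u.-1 :> nat) * (0 < u) + (t == u.+1 :> nat))%N by lia.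
by rewrite !natrD !natrM; ring.
Qed.

Lemma dir_const_before s t : s < c 0 -> t <= K ->
  dir_const d s (c t) = dir_const d s (c 0) && (0 <= t <= 1).
Proof.
move=> s0 tK; have c01 := c_incr K_gt0.
case: t tK => [|[|t]] tK /=; rewrite ?andbT ?andbF //.
  apply/idP/idP => [H|]; first by apply: dir_const_sub H; lia.
  move=> H; apply: dir_const_cat (c_first _) H (c_run K_gt0); lia.
by apply/negbTE; apply: (@not_dir_const_above _ _ 1); lia.
Qed.

Lemma dir_const_after s t : c K < s < n -> t <= K ->
  dir_const d s (c t) = dir_const d s (c K) && (K.-1 <= t <= K.-1.+1).
Proof.
move=> sK tK; have K1 : K.-1 < K by lia.
have cK1 := c_incr K1; have runK1 := c_run K1; rewrite prednK // in cK1 runK1.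
case: (ltngtP t K.-1) => [tK1|K1t|->].
- by rewrite /= andbF; apply/negbTE; apply: (@not_dir_const_below _ _ K.-1); lia.
- have -> : t = K by lia.
  by rewrite /= prednK // leqnn andbT.
rewrite leqnSn /= andbT; apply/idP/idP => [H|H]; first by apply: dir_const_sub H; lia.
rewrite dir_constC; apply: dir_const_cat (c_last _) runK1 _; [lia | lia | by rewrite dir_constC].
Qed.

Lemma dir_const_node u t : u <= K -> t <= K ->
  dir_const d (c u) (c t) = (u.-1 <= t <= u.+1).
Proof.
move=> uK tK; apply/idP/idP => [|t_in].
  apply: contraTT => t_out; have [tu|ut] : t < u.-1 \/ u.+1 < t by lia.
    by apply: (@not_dir_const_below _ _ u.-1); [lia | apply: (c_ltn c_incr); lia].
  by apply: (@not_dir_const_above _ _ u.+1); [lia | done | apply: c_incr; lia].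
case: (ltngtP t u) => [tu|ut|->]; last exact: dir_constnn.
  have <- : t.+1 = u by lia.
  by rewrite dir_constC c_run //; lia.
have -> : t = u.+1 by lia.
by rewrite c_run //; lia.
Qed.

Lemma dir_const_inside s u t : u < K -> c u < s < c u.+1 -> t <= K ->
  dir_const d s (c t) = (u <= t <= u.+1).
Proof.
move=> uK su tK; apply/idP/idP => [|t_in].
  apply: contraTT => t_out; have [tu|ut] : t < u \/ u.+1 < t by lia.
    by apply: (@not_dir_const_below _ _ u); lia.
  by apply: (@not_dir_const_above _ _ u.+1); lia.
have [-> | ->] : t = u \/ t = u.+1 by lia.
  by apply: dir_const_sub (c_run uK); lia.
by apply: dir_const_sub (c_run uK); lia.
Qed.

Lemma zigzag_deriv_le0 s : s < n -> (zigzag_deriv s <= 0)%R.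
Proof.
move=> sn; have K1 : K.-1 < K by lia.
have pair_le0 a (b : bool) : a < K -> (b%:R * (w a + w a.+1) <= 0)%R.
  move=> aK; case: b; rewrite /= ?mulr1n ?mulr0n ?mul1r ?mul0r //.
  exact: zigzag_weight_pair_le0.
have [s0 | s0] := ltnP s (c 0).
  rewrite (@zigzag_deriv_pair s 0 (dir_const d s (c 0))) ?pair_le0 //.
    by move=> t tK; have := c_leq c_incr (leq0n t) tK; lia.
  by move=> t tK; rewrite dir_const_before.
have [u uK [cus s_cu1]] := c_bracket K s0.
have [-> | s_ne] := eqVneq s (c u).
  rewrite zigzag_deriv_node //; first exact: zigzag_weight_triple_le0.
  by move=> t tK; rewrite dir_const_node.
have [uK' | Ku] := ltnP u K.
  rewrite (@zigzag_deriv_pair s u true) ?pair_le0 //.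
    move=> t tK; have [tu | ut] := leqP t u.
      by have := c_leq c_incr tu uK; lia.
    by have := c_leq c_incr ut tK; have := s_cu1 uK'; lia.
  by move=> t tK; rewrite andTb (@dir_const_inside s u) //; have := s_cu1 uK'; lia.
have uK_eq : u = K by lia.
subst u; rewrite (@zigzag_deriv_pair s K.-1 (dir_const d s (c K))) ?pair_le0 //.
  by move=> t tK; have := c_leq c_incr tK (leqnn K); lia.
by move=> t tK; rewrite dir_const_after //; lia.
Qed.

End ZigzagPositions.

Section ZigzagCset.
Context (R : realFieldType) {disp : Order.disp_t} {S : finPOrderType disp}.
Local Open Scope order_scope.

Definition zigzag (K : nat) (z : nat -> S) : Prop :=
  [/\ forall t, (t < K)%N -> (z t < z t.+1) || (z t.+1 < z t),
      forall t, (t.+2 <= K)%N -> z t >< z t.+2,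
      ~~ junction (z 0) & ~~ junction (z K)].

Lemma zigzag_neq K z t : zigzag K z -> (t < K)%N -> z t != z t.+1.
Proof. by case=> z_lt _ _ _ tK; apply/eqP => eq_z; move: (z_lt t tK); rewrite eq_z ltxx. Qed.

Lemma sum_indicator_weights (P : pred S) K (z : nat -> S) (f : nat -> R) :
  (\sum_(y | P y) \sum_(t < K.+1) (y == z t)%:R * f t
   = \sum_(t < K.+1) (P (z t))%:R * f t)%R.
Proof.
rewrite exchange_big /=; apply: eq_bigr => t _.
rewrite big_mkcond /= (bigD1 (z t)) //= eqxx mul1r big1 ?addr0.
  by case: (P (z t)); rewrite ?mul1r ?mul0r.
by move=> y /negbTE ->; rewrite mul0r if_same.
Qed.

Section OrientedPath.
Variables (p : 'I_#|S| -> S) (g : S -> 'I_#|S|).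
Hypotheses (pK : cancel p g) (gK : cancel g p) (p_path : hasse_path_labelling p).
Variables (K : nat) (z : nat -> S).
Hypotheses (K_gt0 : (0 < K)%N) (K_even : ~~ odd K) (zz : zigzag K z)
  (z_oriented : (pos g (z 0) < pos g (z 1))%N).

Let c t := pos g (z t).
Let d := ascends p (g (z 0)).
Let w := zigzag_weight R K.

Let comparable_c x t : (z t >=< x) = dir_const d (pos g x) (c t).
Proof. by rewrite comparable_sym (comparable_pos pK gK p_path (g (z 0))). Qed.

Let c_neq t : (t < K)%N -> c t != c t.+1.
Proof. by rewrite (inj_eq (pos_inj gK)); apply: zigzag_neq. Qed.

Let c_run t : (t < K)%N -> dir_const d (c t) (c t.+1).
Proof.
case: zz => z_lt _ _ _ tK; rewrite -comparable_c comparable_sym.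
by case/orP: (z_lt t tK) => /lt_comparable //; rewrite comparable_sym.
Qed.

Let c_not_run t : (t.+2 <= K)%N -> ~~ dir_const d (c t) (c t.+2).
Proof. by case: zz => _ z_inc _ _ tK; rewrite -comparable_c comparable_sym; apply: z_inc. Qed.

Let c_incr := runs_incr z_oriented c_neq c_run c_not_run.
Let c_turn := runs_turn z_oriented c_neq c_run c_not_run.

Let c_first : (0 < c 0)%N -> ~~ turn d (c 0).
Proof.
case: zz => _ _ j0 _ c0; apply: contra j0 => tr.
have := turn_junction pK gK p_path c0 _ tr; rewrite /c (at_posK gK); apply.
by have := c_incr K_gt0; have := pos_lt g (z 1); lia.
Qed.

Let c_last : ((c K).+1 < #|S|)%N -> ~~ turn d (c K).
Proof.
case: zz => _ _ _ jK cK; apply: contra jK => tr.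
have := turn_junction pK gK p_path _ cK tr; rewrite /c (at_posK gK); apply.
by have := c_ltn c_incr K_gt0 (leqnn K); rewrite /c; lia.
Qed.

Let H (y : S) : R := (\sum_(t < K.+1) (y == z t)%:R * w t)%R.

Let deriv_H x : (H x + \sum_(y | (y >=< x)%O) H y = zigzag_deriv R d K c (pos g x))%R.
Proof.
rewrite /H (sum_indicator_weights (fun y => y >=< x)) -big_split /zigzag_deriv.
by apply: eq_bigr => t _; rewrite mulrDl (inj_eq (pos_inj gK)) comparable_c.
Qed.

Lemma oriented_zigzag_Cset : exists h : 'I_#|S| -> R, Cset (fS R) h.
Proof.
exists (fun i => H (enum_val i)); apply: Cset_fS_weights.
- exists (z 0); rewrite /H.
  rewrite (eq_bigr (fun t : 'I_K.+1 => (t == 0 :> nat)%:R * w t)%R) => [|t _].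
    by rewrite sum_delta mul1r /w zigzag_weight_even //= add0r K_gt0 oner_neq0.
  rewrite -(inj_eq (pos_inj gK)) -/(c 0) -/(c t).
  by rewrite (c_eq c_incr (leq0n K) (ltn_ord t)) eq_sym.
- rewrite (sum_indicator_weights predT); under eq_bigr do rewrite mul1r.
  exact: sum_zigzag_weight.
- move=> x; rewrite deriv_H.
  exact: (zigzag_deriv_le0 R K_gt0 K_even c_incr c_run c_turn c_first c_last (pos_lt g x)).
Qed.

End OrientedPath.

Lemma comparable_lt_pattern (T : eqType) (phi : T -> S) (r : rel T) :
  injective phi -> (forall a b, (phi a < phi b) = r a b) ->
  forall a b, (phi a >=< phi b) = [|| a == b, r a b | r b a].
Proof.
move=> phi_inj phi_lt a b.
rewrite /Order.comparable !le_eqVlt !phi_lt !(inj_eq phi_inj).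
by rewrite [b == a]eq_sym; case: (a == b); case: (r a b); case: (r b a).
Qed.

Lemma zigzag_W k (psi : 'I_k.+2 + 'I_k.+1 -> S) :
  injective psi ->
  (forall a b, (psi a >=< psi b) = [|| a == b, Wk1k_lt a b | Wk1k_lt b a]) ->
  ~~ junction (psi (inl ord0)) -> ~~ junction (psi (inl ord_max)) ->
  zigzag k.+1.*2 (fun t => psi (if odd t then inr (inord t./2) else inl (inord t./2))).
Proof.
move=> psi_inj psi_cmp j0 jK; split.
- move=> t tK.
  have strict a b :
      a != b -> Wk1k_lt a b || Wk1k_lt b a -> (psi a < psi b) || (psi b < psi a).
    move=> ab adj; have := psi_cmp a b; rewrite (negbTE ab) adj orbT.
    by case: comparableP => // /psi_inj eq_ab; rewrite eq_ab eqxx in ab.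
  rewrite /= fun_if [psi (if _ then _ else _)]fun_if.
  case: ifP => ot; apply: strict => //=; rewrite !inordK; lia.
- move=> t tK; rewrite psi_cmp /= negbK.
  by case: ifP => ot /=; rewrite !orbF; apply/eqP => -[] /(congr1 val) /=;
    rewrite !inordK; lia.
- by rewrite /= (_ : inord 0 = ord0) //; apply/val_inj; rewrite /= inordK.
rewrite odd_double doubleK (_ : inord k.+1 = ord_max) //.
by apply/val_inj; rewrite /= inordK.
Qed.

Lemma zigzag_of_Wk1k k : has_Wk1k (S := S) k.+1 -> exists z, zigzag k.+1.*2 z.
Proof.
case=> phi [phi_inj [phi_lt [j0 jK]]]; eexists; apply: zigzag_W j0 jK => //.
exact: comparable_lt_pattern.
Qed.

Definition sum_swap (A B : Type) (x : A + B) : B + A :=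
  match x with inl a => inr a | inr b => inl b end.

Lemma sum_swap_inj (A B : Type) : injective (@sum_swap A B).
Proof. by case=> [a|b] [a'|b'] // [->]. Qed.

Lemma Wkk1_lt_swap k (a b : 'I_k.+1 + 'I_k) :
  Wkk1_lt (sum_swap a) (sum_swap b) = Wk1k_lt b a.
Proof. by case: a b => [i|j] [i'|j']. Qed.

Lemma zigzag_of_Wkk1 k : has_Wkk1 (S := S) k.+1 -> exists z, zigzag k.+1.*2 z.
Proof.
case=> phi [phi_inj [phi_lt [j0 jK]]]; eexists.
apply: (@zigzag_W k (phi \o @sum_swap _ _)) j0 jK.
  exact: inj_comp phi_inj (@sum_swap_inj _ _).
move=> a b; rewrite /= (comparable_lt_pattern phi_inj phi_lt) (inj_eq (@sum_swap_inj _ _)).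
by rewrite !Wkk1_lt_swap [Wk1k_lt b a || _]orbC.
Qed.

Lemma zigzag_Cset K z :
  hasse_is_path (S := S) -> (0 < K)%N -> ~~ odd K -> zigzag K z ->
  exists h : 'I_#|S| -> R, Cset (fS R) h.
Proof.
case=> p [[g pK gK] p_path] K_gt0 K_even zz.
have := zigzag_neq zz K_gt0; rewrite -(inj_eq (pos_inj gK)) neq_ltn => /orP[z_up | z_down].
  exact: (oriented_zigzag_Cset pK gK p_path K_gt0 K_even zz z_up).
apply: (@oriented_zigzag_Cset (p \o @rev_ord _) (@rev_ord _ \o g)) K_gt0 K_even zz _.
- by move=> i; rewrite /= pK rev_ordK.
- by move=> x; rewrite /= rev_ordK gK.
- exact: hasse_path_labelling_rev.
by rewrite /pos /= ltn_sub2lE // ltnS.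
Qed.

End ZigzagCset.

Theorem lemma11 (R : realFieldType) (disp : Order.disp_t)
  (S : finPOrderType disp) (k : nat) :
  (0 < k)%N ->
  @hasse_is_path disp S ->
  (@has_Wkk1 disp S k \/ @has_Wk1k disp S k) ->
  exists h : 'I_#|S| -> R, Cset (@fS disp S R) h.
Proof.
case: k => // k _ path W.
have [z zz] : exists z : nat -> S, zigzag k.+1.*2 z.
  by case: W => W; [apply: zigzag_of_Wkk1 W | apply: zigzag_of_Wk1k W].
by apply: zigzag_Cset path _ _ zz; rewrite ?double_gt0 ?odd_double.
Qed.
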